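(* Let $r\geq 3$, $k\geq 4$, and let $D$ be an $m$-colored semicomplete $r$-partite digraph. Then $D$ has a $k$-colored kernel.
   Context: A semicomplete $r$-partite digraph ($r\ge 2$) is a digraph whose vertex set is partitioned into $r$ nonempty independent sets (partite sets) such that for any two vertices $u,v$ in different partite sets at least one of the arcs $(u,v)$, $(v,u)$ is present (both may be present); there are no arcs inside a partite set. An $m$-colored digraph is a digraph whose arcs are each assigned one of $m$ colors. A directed path (no repeated vertices) is $j$-colored if its arcs use exactly $j$ distinct colors. A $k$-colored kernel of $D$ is a nonempty set $K\subseteq V(D)$ such that (a) for every $u\in V(D)\setminus K$ there exist $v\in K$ and a $j$-colored directed path from $u$ to $v$ with $1\le j\le k$, and (b) for all distinct $u,v\in K$ there is no $j$-colored directed path from $u$ to $v$ with $1\le j\le k$. *)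

From mathcomp Require Import all_boot.
Set Implicit Arguments. Unset Strict Implicit. Unset Printing Implicit Defensive.

Definition semicomplete_multipartite (V : finType) (r : nat) (E : rel V) : Prop :=
  exists part : V -> 'I_r,
    [/\ (forall i : 'I_r, exists v : V, part v = i),
        (forall u v : V, part u = part v -> ~~ E u v) &
        (forall u v : V, part u != part v -> E u v || E v u)].

Definition path_colors (V : finType) (m : nat) (col : V -> V -> 'I_m)
  (u : V) (p : seq V) : seq 'I_m :=
  [seq col xy.1 xy.2 | xy <- zip (u :: p) p].

Definition kcol_path (V : finType) (m : nat) (E : rel V) (col : V -> V -> 'I_m)
  (k : nat) (u v : V) : Prop :=
  exists p : seq V,
    [/\ path E u p, uniq (u :: p), last u p = v &
        let j := size (undup (path_colors col u p)) in (1 <= j) && (j <= k)].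

Definition kcolored_kernel (V : finType) (m : nat) (E : rel V) (col : V -> V -> 'I_m)
  (k : nat) (K : {set V}) : Prop :=
  [/\ K != set0,
      (forall u, u \notin K -> exists2 v, v \in K & kcol_path E col k u v) &
      (forall u v, u \in K -> v \in K -> u != v -> ~ kcol_path E col k u v)].

From mathcomp Require Import all_boot.
Set Implicit Arguments. Unset Strict Implicit. Unset Printing Implicit Defensive.

(* Every m-coloured semicomplete r-partite digraph has a k-coloured kernel
   when k >= 4.  The colouring is essentially irrelevant: a directed walk of
   length at most k from u to v <> u shortens to a path with at least one
   and at most k arcs, hence using between 1 and k colours
   ([reaches_within_kcol]).  The theorem thus follows from two facts about
   reachability in a semicomplete multipartite digraph D:
   - if D has a sink, every non-sink reaches some sink in at most two steps,
     while nothing leaves a sink; so the set of sinks is a kernel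
     ([sink_kernel]);
   - otherwise a vertex v maximising its closed second in-neighbourhood
     [in2 v] is reached from every other vertex in at most four steps
     ([four_king]): vertices outside the partite set of v reach [in2 v] in
     one step (else the second in-neighbourhood of such a u would strictly
     contain that of v, [in2_grows]), and vertices inside it first step out
     of it.  Then {v} is a kernel ([singleton_kernel]). *)

Definition reaches_within (V : finType) (E : rel V) (n : nat) (u v : V) : Prop :=
  exists p : seq V, [/\ path E u p, last u p = v & size p <= n].

Definition sink (V : finType) (E : rel V) (s : V) : bool := [forall w, ~~ E s w].

Definition in2 (V : finType) (E : rel V) (x : V) : {set V} :=
  [set y | [|| y == x, E y x | [exists z, E y z && E z x]]].

Lemma reaches_within_le (V : finType) (E : rel V) (n n' : nat) (u v : V) :
  n <= n' -> reaches_within E n u v -> reaches_within E n' u v.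
Proof. by move=> le_nn' [p [pp lp szp]]; exists p; split; rewrite ?(leq_trans szp). Qed.

Lemma reaches_within_cons (V : finType) (E : rel V) (n : nat) (u w v : V) :
  E u w -> reaches_within E n w v -> reaches_within E n.+1 u v.
Proof. by move=> Euw [p [pp lp szp]]; exists (w :: p); split => //=; rewrite Euw. Qed.

Lemma in2_reaches (V : finType) (E : rel V) (x y : V) :
  y \in in2 E x -> reaches_within E 2 y x.
Proof.
rewrite inE => /or3P [/eqP -> | Eyx | /existsP [z /andP [Eyz Ezx]]].
- by exists [::].
- by exists [:: x]; rewrite /= Eyx.
- by exists [:: z; x]; rewrite /= Eyz Ezx.
Qed.

(* A short walk between distinct vertices yields a k-coloured path: remove
   its loops; the resulting path has between 1 and k arcs. *)
Lemma reaches_within_kcol (V : finType) (m : nat) (E : rel V)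
    (col : V -> V -> 'I_m) (k : nat) (u v : V) :
  reaches_within E k u v -> u != v -> kcol_path E col k u v.
Proof.
move=> [p [pp <- szp]]; case: (shortenP pp) => p' pp' up' sub_p neq.
exists p'; split => //.
have size_colors : size (path_colors col u p') = size p'.
  by rewrite /path_colors size_map size_zip /= (minn_idPr (leqnSn _)).
have p'_short : size p' <= k.
  by rewrite (leq_trans _ szp) // uniq_leq_size //; case/andP: up'.
apply/andP; split; last by rewrite (leq_trans (size_undup _)) // size_colors.
case: p' {pp' up' sub_p size_colors p'_short} neq => [|a p'] neq.
  by rewrite eqxx in neq.
by rewrite lt0n size_eq0; apply/eqP => /undup_nil.
Qed.

(* No path with at least one arc leaves a sink. *)
Lemma sink_no_kcol_path (V : finType) (m : nat) (E : rel V)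
    (col : V -> V -> 'I_m) (k : nat) (s v : V) :
  sink E s -> ~ kcol_path E col k s v.
Proof.
move=> /forallP sink_s [[|a p] [pp _ _ ncol]]; first by [].
by move: pp (sink_s a) => /= /andP [-> _].
Qed.

Lemma singleton_kernel (V : finType) (m : nat) (E : rel V)
    (col : V -> V -> 'I_m) (k : nat) (v : V) :
  (forall u, u != v -> kcol_path E col k u v) -> kcolored_kernel E col k [set v].
Proof.
move=> to_v; split.
- by apply/set0Pn; exists v; rewrite set11.
- by move=> u; rewrite in_set1 => uv; exists v; [rewrite set11 | apply: to_v].
- by move=> u w; rewrite !in_set1 => /eqP -> /eqP ->; rewrite eqxx.
Qed.

Section SemicompleteMultipartite.

Variables (V : finType) (r : nat) (E : rel V) (part : V -> 'I_r).
Hypothesis part_indep : forall u v, part u = part v -> ~~ E u v.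
Hypothesis part_adj : forall u v, part u != part v -> E u v || E v u.

Lemma arc_parts (a b : V) : E a b -> part a != part b.
Proof. by move=> Eab; apply/eqP => /part_indep; rewrite Eab. Qed.

Lemma arc_to_sink (u s : V) : sink E s -> part u != part s -> E u s.
Proof.
by move=> /forallP sink_s /part_adj; rewrite (negbTE (sink_s u)) orbF.
Qed.

(* A non-sink reaches any sink in at most two steps: through its
   out-neighbour if it lies in the partite set of the sink, directly
   otherwise. *)
Lemma reach_sink (u s : V) :
  sink E s -> ~~ sink E u -> reaches_within E 2 u s.
Proof.
move=> sink_s; rewrite negb_forall => /existsP [w]; rewrite negbK => Euw.
case: (eqVneq (part u) (part s)) => [pus | pus].
  have Ews : E w s by rewrite arc_to_sink // -pus eq_sym arc_parts.
  by exists [:: w; s]; rewrite /= Euw Ews.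
by exists [:: s]; rewrite /= arc_to_sink.
Qed.

Lemma sink_kernel (m : nat) (col : V -> V -> 'I_m) (k : nat) (s : V) :
  2 <= k -> sink E s -> kcolored_kernel E col k [set x | sink E x].
Proof.
move=> k2 sink_s; split.
- by apply/set0Pn; exists s; rewrite inE.
- move=> u; rewrite inE => nsink_u; exists s; rewrite ?inE //.
  apply: reaches_within_kcol; first exact: reaches_within_le k2 (reach_sink _ _).
  by apply: contraNneq nsink_u => ->.
- by move=> u w; rewrite inE => sink_u _ _; apply: sink_no_kcol_path.
Qed.

Lemma in2_grows (u v : V) :
  part u != part v -> (forall z, E u z -> z \notin in2 E v) ->
  u |: in2 E v \subset in2 E u.
Proof.
move=> puv far_u; apply/subsetP => w; rewrite !inE => /orP [-> // | wv].
case: (eqVneq (part w) (part u)) => [pwu | pwu]; last first.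
  case/orP: (part_adj pwu) => [-> | Euw]; first by rewrite orbT.
  by move: (far_u w Euw); rewrite inE wv.
have [p Ewp pv] : exists2 p, E w p & (p == v) || E p v.
  case/or3P: wv => [/eqP ewv | Ewv | /existsP [z /andP [Ewz Ezv]]].
  - by move: puv; rewrite -ewv pwu eqxx.
  - by exists v; rewrite ?eqxx.
  - by exists z; rewrite ?Ezv ?orbT.
have ppu : part p != part u by rewrite -pwu eq_sym arc_parts.
case/orP: (part_adj ppu) => [Epu | Eup].
  by apply/or3P; apply: Or33; apply/existsP; exists p; rewrite Ewp Epu.
by move: (far_u p Eup); rewrite inE; case/orP: pv => ->; rewrite ?orbT.
Qed.

Lemma in2_max_absorbs (u v : V) :
  (forall x, #|in2 E x| <= #|in2 E v|) -> part u != part v ->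
  exists2 z, E u z & z \in in2 E v.
Proof.
move=> vmax puv.
have [/existsP [z /andP [Euz zv]] | /existsPn near_u] :=
  boolP [exists z, E u z && (z \in in2 E v)]; first by exists z.
have far_u z : E u z -> z \notin in2 E v by move=> Euz; move: (near_u z); rewrite Euz.
have u_out : u \notin in2 E v.
  rewrite inE negb_or; apply/andP; split; first by apply: contraNneq puv => ->.
  rewrite negb_or; apply/andP; split.
    by apply/negP => Euv; move: (far_u v Euv); rewrite inE eqxx.
  apply/existsPn => z; apply/negP => /andP [Euz Ezv].
  by move: (far_u z Euz); rewrite inE Ezv orbT.
have := leq_trans (subset_leq_card (in2_grows puv far_u)) (vmax u).
by rewrite cardsU1 u_out ltnn.
Qed.

Lemma four_king (u v : V) :
  (forall x, exists w, E x w) -> (forall x, #|in2 E x| <= #|in2 E v|) ->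
  u != v -> reaches_within E 4 u v.
Proof.
move=> no_sink vmax uv.
have three_steps x : part x != part v -> reaches_within E 3 x v.
  by move=> pxv; have [z Exz /in2_reaches] := in2_max_absorbs vmax pxv;
     apply: reaches_within_cons.
case: (eqVneq (part u) (part v)) => [puv | puv]; last first.
  exact: reaches_within_le (three_steps u puv).
have [w Euw] := no_sink u.
apply: (reaches_within_cons Euw (three_steps w _)).
by rewrite -puv eq_sym arc_parts.
Qed.

End SemicompleteMultipartite.

Theorem mainTheorem6 (V : finType) (r m k : nat) (E : rel V) (col : V -> V -> 'I_m) :
  3 <= r -> 4 <= k -> semicomplete_multipartite r E ->
  exists K : {set V}, kcolored_kernel E col k K.
Proof.
move=> r3 k4 [part [part_onto part_indep part_adj]].
have [v0 _] := part_onto (Ordinal (ltn_trans (isT : 0 < 2) r3)).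
have [/existsP [s sink_s] | no_sink] := boolP [exists s, sink E s].
  exists [set x | sink E x].
  exact: (sink_kernel part_indep part_adj col (ltnW (ltnW k4)) sink_s).
have out_arc x : exists w, E x w.
  move: no_sink; rewrite negb_exists => /forallP /(_ x).
  by rewrite negb_forall => /existsP [w]; rewrite negbK; exists w.
have [v _ vmax] := @arg_maxnP V v0 xpredT (fun x => #|in2 E x|) erefl.
exists [set v]; apply: singleton_kernel => u uv.
apply: (reaches_within_kcol col _ uv); apply: (reaches_within_le k4).
exact: (four_king part_indep part_adj out_arc (fun x => vmax x erefl) uv).
Qed.
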